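(* For any $\mathcal{H}, \mathcal{G} \in \mathcal{P}$, the following relationships between the model inclusion order and the twin order exist: (i) if $\mathcal{H} \preceq_{s} \mathcal{G}$ then $\mathcal{H} \preceq_{t} \mathcal{G}$; (ii) if $\mathcal{H} \preceq_{s} \mathcal{G}$ and $\mathcal{H}$ is covered by $\mathcal{G}$ in the twin order (i.e., $\mathcal{H} \prec_{t} \mathcal{G}$ and there is no $\mathcal{F}\in\mathcal{P}$ with $\mathcal{H} \prec_{t} \mathcal{F} \prec_{t} \mathcal{G}$), then $\mathcal{H}$ is covered by $\mathcal{G}$ in the model inclusion order (i.e., $\mathcal{H} \prec_{s} \mathcal{G}$ and there is no $\mathcal{F}\in\mathcal{P}$ with $\mathcal{H} \prec_{s} \mathcal{F} \prec_{s} \mathcal{G}$).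
   Context: Let $V=\{1,\dots,p\}$ and let $\tau$ be a twin-pairing function on $V$, i.e. $\tau(i)\in V$ with $\tau(\tau(i))=i$ and $\tau(i)\neq i$; it is extended to edges by $\tau(i,j)=(\tau(i),\tau(j))$ (endpoints reordered so the smaller comes first) and to sets elementwise. Fix a partition $(L,R)$ of $V$ with $\tau(L)=R$, numbered so that $L=\{1,\dots,q\}$, $R=\{q+1,\dots,p\}$. Let $F_V=\{(i,j): i,j\in V, i<j\}$, $F_L=\{(i,j)\in F_V: i<\tau(j)\}$, $F_R=\{(i,j)\in F_V: i>\tau(j)\}$. A coloured graph $\mathcal G=(\mathcal V,\mathcal E)$ consists of a partition $\mathcal V$ of $V$ into vertex colour classes and a partition $\mathcal E$ of an edge set $E\subseteq F_V$ into edge colour classes. It is a coloured graph for paired data (pdCG) if every colour class is either atomic (a single element) or twin-pairing (of the form $\{i,\tau(i)\}$ or $\{(i,j),\tau(i,j)\}$ with $(i,j)\neq\tau(i,j)$). The associated RCON model for paired data $\mathcal{P}(\mathcal G)$ is the family of Gaussian distributions whose concentration matrix has zero entries for missing edges and equal entries for vertices (diagonal entries) or edges (off-diagonal entries) in the same colour class; $\mathcal{P}$ denotes the family of all pdCGs on $V$ (equivalently, of these models). Every pdCG is equivalently represented by the quadruplet $(V,E,\mathbb L,\mathbb E)$ where $E$ is the union of the edge colour classes, $E_L=E\cap F_L$, $E_R=E\cap F_R$, $\mathbb L=\{i\in L:\{i\}\in\mathcal V\}$ and $\mathbb E=\{(i,j)\in E_L\cap\tau(E_R): \{(i,j)\}\in\mathcal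 E\}$. The model inclusion order is $\mathcal H\preceq_s\mathcal G$ iff $\mathcal P(\mathcal H)\subseteq\mathcal P(\mathcal G)$, which holds iff the edge set of $\mathcal H$ is contained in that of $\mathcal G$, every vertex colour class of $\mathcal H$ is a union of vertex colour classes of $\mathcal G$, and every edge colour class of $\mathcal H$ is a union of edge colour classes of $\mathcal G$. The twin order is $\mathcal H\preceq_t\mathcal G$ iff $E_{\mathcal H}\subseteq E_{\mathcal G}$, $\mathbb L_{\mathcal H}\subseteq\mathbb L_{\mathcal G}$ and $\mathbb E_{\mathcal H}\subseteq\mathbb E_{\mathcal G}$. Strict versions are denoted $\prec_s$, $\prec_t$. *)

(* Vertices V = {1,...,p} are represented 0-based by 'I_p
   (the shift preserves all order comparisons). *)
From HB Require Import structures.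
From mathcomp Require Import all_boot all_order all_algebra.
From mathcomp Require Import reals.

Set Implicit Arguments.
Unset Strict Implicit.
Unset Printing Implicit Defensive.

Import GRing.Theory Num.Theory.

Definition edge (p : nat) := ('I_p * 'I_p)%type.

Definition FV (p : nat) : {set edge p} := [set e : edge p | (e.1 < e.2)%N].

Definition twin_pairing (p : nat) (tau : 'I_p -> 'I_p) : Prop :=
  (forall i, tau (tau i) = i) /\ (forall i, tau i != i).

Definition Lset (p q : nat) : {set 'I_p} := [set i : 'I_p | (i < q)%N].
Definition Rset (p q : nat) : {set 'I_p} := [set i : 'I_p | (q <= i)%N].

Definition LR_compatible (p q : nat) (tau : 'I_p -> 'I_p) : Prop :=
  tau @: Lset p q = Rset p q.

Definition tau_e (p : nat) (tau : 'I_p -> 'I_p) (e : edge p) : edge p :=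
  if (tau e.1 < tau e.2)%N then (tau e.1, tau e.2) else (tau e.2, tau e.1).

Definition FL (p : nat) (tau : 'I_p -> 'I_p) : {set edge p} :=
  [set e in FV p | (e.1 < tau e.2)%N].
Definition FR (p : nat) (tau : 'I_p -> 'I_p) : {set edge p} :=
  [set e in FV p | (tau e.2 < e.1)%N].

(* A coloured graph: (vertex colour classes, edge colour classes). *)
Definition cgraph (p : nat) := ({set {set 'I_p}} * {set {set edge p}})%type.

Definition Eset (p : nat) (G : cgraph p) : {set edge p} := cover G.2.

Definition is_pdCG (p : nat) (tau : 'I_p -> 'I_p) (G : cgraph p) : Prop :=
  [/\ partition G.1 [set: 'I_p],
      partition G.2 (Eset G),
      Eset G \subset FV p,
      (forall C, C \in G.1 ->
         (exists i, C = [set i]) \/ (exists i, C = [set i; tau i]))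
    & (forall C, C \in G.2 ->
         (exists e, C = [set e]) \/
         (exists e, tau_e tau e != e /\ C = [set e; tau_e tau e]))].

Definition posdef (R : realType) (p : nat) (K : 'M[R]_p) : Prop :=
  forall v : 'rV[R]_p, (v != 0)%R -> (0 < (v *m K *m trmx v) ord0 ord0)%R.

(* K is the concentration matrix of a distribution in the RCON model P(G):
   symmetric positive definite, zero for missing edges, equal entries within
   each vertex (diagonal) and edge (off-diagonal) colour class. *)
Definition in_model (R : realType) (p : nat) (G : cgraph p) (K : 'M[R]_p) : Prop :=
  [/\ trmx K = K,
      posdef K,
      (forall i j : 'I_p, (i < j)%N -> (i, j) \notin Eset G -> K i j = 0%R),
      (forall C, C \in G.1 -> forall i j, i \in C -> j \in C -> K i i = K j j)
    & (forall C, C \in G.2 -> forall e f : edge p, e \in C -> f \in C ->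
         K e.1 e.2 = K f.1 f.2)].

Definition s_le (R : realType) (p : nat) (H G : cgraph p) : Prop :=
  forall K : 'M[R]_p, in_model H K -> in_model G K.
Definition s_lt (R : realType) (p : nat) (H G : cgraph p) : Prop :=
  s_le R H G /\ ~ s_le R G H.

Definition LL (p q : nat) (G : cgraph p) : {set 'I_p} :=
  [set i in Lset p q | [set i] \in G.1].
Definition EE (p : nat) (tau : 'I_p -> 'I_p) (G : cgraph p) : {set edge p} :=
  [set e in (Eset G :&: FL tau) :&: (tau_e tau @: (Eset G :&: FR tau))
     | [set e] \in G.2].

Definition t_le (p q : nat) (tau : 'I_p -> 'I_p) (H G : cgraph p) : Prop :=
  [/\ Eset H \subset Eset G, LL q H \subset LL q G & EE tau H \subset EE tau G].
Definition t_lt (p q : nat) (tau : 'I_p -> 'I_p) (H G : cgraph p) : Prop :=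
  t_le q tau H G /\ ~ t_le q tau G H.

Definition t_covered (p q : nat) (tau : 'I_p -> 'I_p) (H G : cgraph p) : Prop :=
  t_lt q tau H G /\
  ~ (exists F : cgraph p, is_pdCG tau F /\ t_lt q tau H F /\ t_lt q tau F G).
Definition s_covered (R : realType) (p : nat) (tau : 'I_p -> 'I_p) (H G : cgraph p) : Prop :=
  s_lt R H G /\
  ~ (exists F : cgraph p, is_pdCG tau F /\ s_lt R H F /\ s_lt R F G).

(* Part (i): each of the three inclusions of the twin order is tested by one
   concentration matrix of P(H), namely a strictly diagonally dominant matrix
   with the sparsity pattern of H, weight 1 on the edges and 2p on the
   diagonal, plus one extra unit on a vertex or edge that is an atomic class
   of H.  If the inclusion failed for G, this matrix would break a zero or an
   equality constraint of G.
   Part (ii): when E_F = E_H and F <=_t H, every twin-pairing class of H is a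
   class of F, since otherwise its representative in L (or F_L) would be
   atomic in F, hence in H; so P(F) is contained in P(H).  An F strictly
   between H and G for the model inclusion order is thus strictly between them
   for the twin order as well. *)

From mathcomp Require Import all_boot all_order all_algebra.
From mathcomp Require Import reals.
From mathcomp Require Import lra zify.

Set Implicit Arguments.
Unset Strict Implicit.
Unset Printing Implicit Defensive.

Import Order.TTheory GRing.Theory Num.Theory.
Local Open Scope ring_scope.

Section DiagonalDominance.
Variables (R : realType) (p : nat).

Lemma quad_formE (K : 'M[R]_p) (v : 'rV[R]_p) :
  (v *m K *m v^T) 0 0 = \sum_i \sum_j v 0 i * K i j * v 0 j.
Proof.
rewrite mxE exchange_big; apply: eq_bigr => j _.
by rewrite !mxE big_distrl; apply: eq_bigr.
Qed.

Lemma sum_sqr_gt0 (v : 'rV[R]_p) : v != 0 -> 0 < \sum_i v 0 i ^+ 2.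
Proof.
move=> v0; rewrite lt_def sumr_ge0 ?andbT => [|i _]; last exact: sqr_ge0.
apply: contra v0 => /eqP/psumr_eq0P v_eq0; apply/eqP/rowP => i.
by rewrite mxE; apply/eqP; rewrite -sqrf_eq0 v_eq0 // => j _; apply: sqr_ge0.
Qed.

Lemma diag_dominant_posdef (K : 'M[R]_p) (b d : R) :
  (p%:R - 1) * b < d ->
  (forall i j, i != j -> `|K i j| <= b) -> (forall i, d <= K i i) -> posdef K.
Proof.
move=> bd Koff Kdiag v v0; rewrite quad_formE.
set x := fun i => v 0 i; set s := \sum_i x i ^+ 2.
have s_gt0 : 0 < s by exact: sum_sqr_gt0.
(* Summing these bounds gives 2 v K v^T >= 2 (d - (p - 1) b) |v|^2. *)
have term i j : - b * (x i ^+ 2 + x j ^+ 2) + (i == j)%:R * (2 * (d + b) * x i ^+ 2)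
                <= 2 * (x i * K i j * x j).
  have [<-|ij] := eqVneq i j.
    have Kd : 0 <= K i i - d by rewrite subr_ge0.
    have := mulr_ge0 Kd (sqr_ge0 (x i)); rewrite mul1r; nra.
  (* (b + K)(x_i + x_j)^2 + (b - K)(x_i - x_j)^2 = 2b(x_i^2 + x_j^2) + 4 K x_i x_j *)
  have /andP[Kl Ku] : (0 <= b + K i j) && (0 <= b - K i j).
    by have := Koff i j ij; rewrite ler_norml subr_ge0 -lerBlDl sub0r.
  have := mulr_ge0 Kl (sqr_ge0 (x i + x j)).
  have := mulr_ge0 Ku (sqr_ge0 (x i - x j)).
  rewrite mul0r addr0; nra.
have row i : \sum_j (- b * (x i ^+ 2 + x j ^+ 2) + (i == j)%:R * (2 * (d + b) * x i ^+ 2))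
             = - b * (p%:R * x i ^+ 2 + s) + 2 * (d + b) * x i ^+ 2.
  rewrite big_split /= -mulr_sumr big_split /= sumr_const card_ord -/s.
  rewrite -[x i ^+ 2 *+ p]mulr_natl.
  rewrite (bigD1 i) //= eqxx mul1r big1 ?addr0 // => j /negbTE ji.
  by rewrite eq_sym ji mul0r.
suff : 0 < \sum_i \sum_j 2 * (x i * K i j * x j).
  by under eq_bigr do rewrite -mulr_sumr; rewrite -mulr_sumr pmulr_rgt0.
apply: (lt_le_trans _ (ler_sum _ (fun i _ => ler_sum _ (fun j _ => term i j)))).
rewrite (eq_bigr _ (fun i _ => row i)) big_split /= -mulr_sumr big_split /=.
rewrite -mulr_sumr sumr_const card_ord mulr_natl -!mulr_sumr -/s; nra.
Qed.

End DiagonalDominance.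

Section PartitionClasses.
Variables (T : finType) (P : {set {set T}}).
Hypothesis tiP : trivIset P.

Lemma set1_set2_class x y : [set x] \in P -> [set x; y] \in P -> y = x.
Proof.
move=> Px Pxy; have := set22 x y.
by rewrite -(def_pblock tiP Pxy (set21 x y)) (def_pblock tiP Px (set11 x)) => /set1P.
Qed.

Lemma set1_class_eqb x C y z :
  [set x] \in P -> C \in P -> y \in C -> z \in C -> (y == x) = (z == x).
Proof.
move=> Px PC yC zC.
have CxE u : u \in C -> u == x -> C = [set x].
  by move=> uC /eqP uE; rewrite -(def_pblock tiP PC uC) uE (def_pblock tiP Px (set11 x)).
apply/eqP/eqP => [/eqP/(CxE y yC) C1 | /eqP/(CxE z zC) C1].
  by apply/set1P; rewrite -C1.
by apply/set1P; rewrite -C1.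
Qed.

End PartitionClasses.

Lemma set2_involE (T : finType) (f : T -> T) m k :
  f (f m) = m -> k \in [set m; f m] -> [set m; f m] = [set k; f k].
Proof. by move=> fK /set2P[->|->] //; rewrite fK setUC. Qed.

Section PairedData.
Variables (p q : nat) (tau : 'I_p -> 'I_p).
Hypothesis tau_twin : twin_pairing tau.
Hypothesis tau_LR : LR_compatible q tau.

Lemma tauK : involutive tau. Proof. by case: tau_twin. Qed.

Lemma tau_neq i : tau i != i. Proof. by case: tau_twin. Qed.

Lemma tau_inj : injective tau. Proof. exact: inv_inj tauK. Qed.

Lemma leq_tau i : (q <= tau i)%N = (i < q)%N.
Proof.
have [iL|iR] := ltnP i q.
  have : tau i \in Rset p q by rewrite -tau_LR imset_f // inE.
  by rewrite inE.
have : i \in Rset p q by rewrite inE.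
by rewrite -tau_LR => /imsetP[k]; rewrite inE => kL ->; rewrite tauK leqNgt kL.
Qed.

Lemma tau_eK e : e \in FV p -> tau_e tau (tau_e tau e) = e.
Proof.
case: e => a b; rewrite inE /= => ab.
rewrite /tau_e /=; have [lt_ab|le_ba] := ltnP (tau a) (tau b); rewrite /= !tauK ?ab //.
by rewrite ltnNge ltnW.
Qed.

Lemma tau_e_FV e : e \in FV p -> tau_e tau e \in FV p.
Proof.
case: e => a b; rewrite /tau_e !inE /= => ab.
case: ifP => //= /negbT; rewrite -leqNgt leq_eqVlt => /orP[/eqP/val_inj/tau_inj ba|//].
by move: ab; rewrite ba ltnn.
Qed.

Lemma tau_e_FR e : e \in FV p -> (tau_e tau e \in FR tau) = (e \in FL tau).
Proof.
case: e => a b; rewrite /tau_e !inE /= => ab.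
have ha := leq_tau a; have hb := leq_tau b.
have nab : nat_of_ord (tau a) != tau b.
  by apply/eqP => /val_inj/tau_inj ba; move: ab; rewrite ba ltnn.
rewrite ab; case: ifP => /= tab; rewrite ?inE /= !tauK; apply/idP/idP;
  move: ha hb; case: (ltnP a q); case: (ltnP b q); lia.
Qed.

Lemma tau_e_FL e : e \in FV p -> (tau_e tau e \in FL tau) = (e \in FR tau).
Proof. by move=> eV; rewrite -{2}(tau_eK eV) tau_e_FR ?tau_e_FV. Qed.

Lemma tau_e_twin e : e \in FV p -> e \notin FL tau -> e \notin FR tau -> tau_e tau e = e.
Proof.
case: e => a b; rewrite /tau_e !inE /= => ab; rewrite ab /= -!leqNgt => h1 h2.
have /val_inj a_tb : nat_of_ord a = tau b by apply/eqP; rewrite eqn_leq h1 h2.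
by rewrite a_tb tauK ltnNge ltnW // -a_tb.
Qed.

Lemma tau_e_FL_neq e : e \in FL tau -> tau_e tau e != e.
Proof.
move=> eL; have eV : e \in FV p by case/setIdP: eL.
have eR : tau_e tau e \in FR tau by rewrite tau_e_FR.
apply/eqP => ee; move: eR eL; rewrite ee !inE => /andP[_ ltR] /andP[_ ltL].
by move: (ltn_trans ltR ltL); rewrite ltnn.
Qed.

Lemma tau_set2_L k : exists2 i : 'I_p, (i < q)%N & [set k; tau k] = [set i; tau i].
Proof.
have [kL|kR] := ltnP k q; first by exists k.
exists (tau k); first by rewrite -leq_tau tauK.
by apply: set2_involE; rewrite ?tauK // !inE eqxx orbT.
Qed.

Lemma tau_e_set2_FL k : k \in FV p -> tau_e tau k != k ->
  exists2 g, g \in FL tau & [set k; tau_e tau k] = [set g; tau_e tau g].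
Proof.
move=> kV nk; case kL: (k \in FL tau); first by exists k.
case kR: (k \in FR tau); last by rewrite tau_e_twin ?kL ?kR ?eqxx in nk.
exists (tau_e tau k); first by rewrite tau_e_FL.
by apply: set2_involE; rewrite ?tau_eK // !inE eqxx orbT.
Qed.

Lemma vclass_cases G : is_pdCG tau G ->
  forall i, [set i] \in G.1 \/ [set i; tau i] \in G.1.
Proof.
case=> /and3P[/eqP covG _ _] _ _ shapeG _ i.
have /bigcupP[D DG iD] : i \in cover G.1 by rewrite covG inE.
case: (shapeG D DG) => [[m Dm]|[m Dm]]; rewrite Dm in iD DG.
  by left; move/set1P: iD => ->.
by right; rewrite -(set2_involE (tauK m) iD).
Qed.

Lemma eclass_cases G : is_pdCG tau G ->
  forall e, e \in Eset G -> [set e] \in G.2 \/ [set e; tau_e tau e] \in G.2.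
Proof.
case=> _ _ EG _ shapeG e /bigcupP[D DG eD].
have mV m : m \in D -> m \in FV p by move=> mD; apply/(subsetP EG)/bigcupP; exists D.
case: (shapeG D DG) => [[m Dm]|[m [_ Dm]]]; rewrite Dm in eD DG mV.
  by left; move/set1P: eD => ->.
by right; rewrite -(set2_involE (tau_eK (mV m (set21 _ _))) eD).
Qed.

Lemma inEE G e : e \in FL tau ->
  (e \in EE tau G) = [&& e \in Eset G, tau_e tau e \in Eset G & [set e] \in G.2].
Proof.
move=> eL; have eV : e \in FV p by case/setIdP: eL.
rewrite /EE inE !in_setI eL andbT.
have -> : (e \in tau_e tau @: (Eset G :&: FR tau)) = (tau_e tau e \in Eset G).
  apply/imsetP/idP => [[h /setIP[hE hR] ->]|teE].
    by rewrite tau_eK //; case/setIdP: hR.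
  by exists (tau_e tau e); rewrite ?tau_eK // inE teE tau_e_FR.
by rewrite andbA.
Qed.

Variable R : realType.

Definition pattern_mx (E : {set edge p}) (d : 'I_p -> R) (w : edge p -> R) : 'M[R]_p :=
  \matrix_(i, j) if (i < j)%N then (if (i, j) \in E then w (i, j) else 0)
                 else if (j < i)%N then (if (j, i) \in E then w (j, i) else 0)
                 else d i.

Lemma pattern_mx_edge E d w e :
  e \in FV p -> pattern_mx E d w e.1 e.2 = if e \in E then w e else 0.
Proof. by case: e => a b; rewrite inE /= => ab; rewrite mxE ab. Qed.

Lemma pattern_mx_diag E d w i : pattern_mx E d w i i = d i.
Proof. by rewrite mxE ltnn. Qed.

Lemma pattern_mx_model H d w : is_pdCG tau H ->
  (forall C, C \in H.1 -> forall i j, i \in C -> j \in C -> d i = d j) ->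
  (forall C, C \in H.2 -> forall e f, e \in C -> f \in C -> w e = w f) ->
  (forall i, 2 * p%:R <= d i) -> (forall e, `|w e| <= 2) ->
  in_model H (pattern_mx (Eset H) d w).
Proof.
case=> _ _ EH _ _ d_const w_const d_ge w_le; split.
- apply/matrixP => i j; rewrite !mxE.
  by case: (ltngtP i j) => // /val_inj ->.
- apply: (@diag_dominant_posdef _ _ _ 2 (2 * p%:R)) => [|i j ij|i]; first lra.
    rewrite mxE; case: (ltngtP i j) => [_|_|/val_inj eq_ij]; try by case: ifP; rewrite ?normr0.
    by rewrite eq_ij eqxx in ij.
  by rewrite pattern_mx_diag.
- by move=> i j ij nE; rewrite mxE ij (negbTE nE).
- by move=> C HC i j iC jC; rewrite !pattern_mx_diag (d_const C HC i j).
- move=> C HC e f eC fC.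
  have CE : C \subset Eset H by apply: bigcup_sup.
  have [eE fE] := (subsetP CE e eC, subsetP CE f fC).
  rewrite !pattern_mx_edge ?eE ?fE ?(subsetP EH) //; exact: w_const HC e f eC fC.
Qed.

Lemma Eset_sub_of_s_le H G : is_pdCG tau H -> s_le R H G -> Eset H \subset Eset G.
Proof.
move=> hH sHG; have [_ _ EH _ _] := hH.
have [_ _ K0 _ _] : in_model G (pattern_mx (Eset H) (fun=> 2 * p%:R) (fun=> 1)).
  by apply/sHG/pattern_mx_model => // e; rewrite normr1; lra.
apply/subsetP => e eH; apply/negPn/negP => eG.
have eV := subsetP EH e eH; have lt12 : (e.1 < e.2)%N by rewrite inE in eV.
have := K0 e.1 e.2 lt12; rewrite -surjective_pairing pattern_mx_edge // eH.
by move=> /(_ eG)/eqP; rewrite oner_eq0.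
Qed.

Lemma LL_sub_of_s_le H G : is_pdCG tau H -> is_pdCG tau G -> s_le R H G ->
  LL q H \subset LL q G.
Proof.
move=> hH hG sHG; apply/subsetP => i; rewrite !inE => /andP[iL Hi]; rewrite iL /=.
have [//|Gi] := vclass_cases hG i.
have [/and3P[_ tiH _] _ _ _ _] := hH.
pose d j : R := 2 * p%:R + (j == i)%:R.
have [_ _ _ Kv _] : in_model G (pattern_mx (Eset H) d (fun=> 1)).
  apply/sHG/pattern_mx_model => // [C HC j k jC kC|j|e].
  - by rewrite /d (set1_class_eqb tiH Hi HC jC kC).
  - by rewrite /d lerDl.
  - by rewrite normr1; lra.
have := Kv _ Gi i (tau i) (set21 _ _) (set22 _ _).
by rewrite !pattern_mx_diag /d eqxx (negbTE (tau_neq i)) /=; lra.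
Qed.

Lemma EE_sub_of_s_le H G : is_pdCG tau H -> is_pdCG tau G -> s_le R H G ->
  EE tau H \subset EE tau G.
Proof.
move=> hH hG sHG; have EHG := Eset_sub_of_s_le hH sHG.
apply/subsetP => e eEE; have eL : e \in FL tau by case/setIdP: eEE => /setIP[/setIP[]].
move: eEE; rewrite !inEE // => /and3P[eH teH He]; rewrite !(subsetP EHG) //=.
have [//|Ge] := eclass_cases hG (subsetP EHG e eH).
have [_ /and3P[_ tiH _] EH _ _] := hH.
pose w f : R := 1 + (f == e)%:R.
have [_ _ _ _ Ke] : in_model G (pattern_mx (Eset H) (fun=> 2 * p%:R) w).
  apply/sHG/pattern_mx_model => // [C HC f g fC gC|f].
  - by rewrite /w (set1_class_eqb tiH He HC fC gC).
  - by rewrite /w ger0_norm; case: (f == e) => /=; lra.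
have := Ke _ Ge e (tau_e tau e) (set21 _ _) (set22 _ _).
rewrite !pattern_mx_edge ?(subsetP EH) // eH teH /w eqxx.
by rewrite (negbTE (tau_e_FL_neq eL)) /=; lra.
Qed.

Lemma t_le_of_s_le H G : is_pdCG tau H -> is_pdCG tau G -> s_le R H G -> t_le q tau H G.
Proof.
move=> hH hG sHG; split.
- exact: Eset_sub_of_s_le sHG.
- exact: LL_sub_of_s_le sHG.
- exact: EE_sub_of_s_le sHG.
Qed.

Lemma vclass2_of_LL_sub F H : is_pdCG tau F -> is_pdCG tau H -> LL q F \subset LL q H ->
  forall k, [set k; tau k] \in H.1 -> [set k; tau k] \in F.1.
Proof.
move=> hF hH LFH k; have [i iL ->] := tau_set2_L k => Hi2.
have [Fi|//] := vclass_cases hF i.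
have [/and3P[_ tiH _] _ _ _ _] := hH.
have : i \in LL q H by rewrite (subsetP LFH) // !inE iL.
rewrite inE => /andP[_ Hi].
by have := tau_neq i; rewrite (set1_set2_class tiH Hi Hi2) eqxx.
Qed.

Lemma eclass2_of_EE_sub F H : is_pdCG tau F -> is_pdCG tau H ->
  EE tau F \subset EE tau H -> Eset H \subset Eset F ->
  forall k, tau_e tau k != k -> [set k; tau_e tau k] \in H.2 -> [set k; tau_e tau k] \in F.2.
Proof.
move=> hF hH EEFH EHF k nk Hk2.
have [_ /and3P[_ tiH _] EH _ _] := hH.
have kV : k \in FV p.
  by apply: (subsetP EH); apply/bigcupP; exists [set k; tau_e tau k]; rewrite ?set21.
have [g gL kgE] := tau_e_set2_FL kV nk; rewrite kgE in Hk2 *.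
have gC f : f \in [set g; tau_e tau g] -> f \in Eset F.
  by move=> fC; apply: (subsetP EHF); apply/bigcupP; exists [set g; tau_e tau g].
have [Fg|//] := eclass_cases hF (gC g (set21 _ _)).
have : g \in EE tau H by rewrite (subsetP EEFH) // inEE // Fg !gC ?set21 ?set22.
rewrite inEE // => /and3P[_ _ Hg].
by have := tau_e_FL_neq gL; rewrite (set1_set2_class tiH Hg Hk2) eqxx.
Qed.

Lemma s_le_of_t_le F H : is_pdCG tau F -> is_pdCG tau H ->
  t_le q tau F H -> Eset H \subset Eset F -> s_le R F H.
Proof.
move=> hF hH [EFH LFH EEFH] EHF K [Ksym Kpos K0 Kv Ke].
have [_ _ _ vshape eshape] := hH; split => //.
- by move=> i j ij nE; apply: K0 => //; apply: contra nE; apply: (subsetP EFH).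
- move=> C HC; case: (vshape C HC) => [[k ->] i j /set1P-> /set1P-> //|[k Ck]].
  by apply: Kv; rewrite Ck (vclass2_of_LL_sub hF hH LFH) // -Ck.
- move=> C HC; case: (eshape C HC) => [[k ->] e f /set1P-> /set1P-> //|[k [nk Ck]]].
  by apply: Ke; rewrite Ck (eclass2_of_EE_sub hF hH EEFH EHF nk) // -Ck.
Qed.

End PairedData.

Theorem proposition7 (R : realType) (p q : nat) (tau : 'I_p -> 'I_p) :
  twin_pairing tau -> LR_compatible q tau ->
  forall H G : cgraph p, is_pdCG tau H -> is_pdCG tau G ->
    (s_le R H G -> t_le q tau H G) /\
    (s_le R H G -> t_covered q tau H G -> s_covered R tau H G).
Proof.
move=> tau_twin tau_LR H G hH hG.
have t_of_s := @t_le_of_s_le p q tau tau_twin tau_LR R.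
have s_of_t := @s_le_of_t_le p q tau tau_twin tau_LR R.
split=> [|sHG [[tHG ntGH] no_t_between]]; first exact: t_of_s.
split; first by split=> // sGH; apply: ntGH; exact: t_of_s.
move=> [F [hF [[sHF nsFH] [sFG nsGF]]]]; apply: no_t_between; exists F.
have [tHF tFG] := (t_of_s _ _ hH hF sHF, t_of_s _ _ hF hG sFG).
split=> //; split; split=> // t_rev.
- by apply: nsFH; apply: s_of_t => //; case: tHF.
- by apply: nsGF; apply: s_of_t => //; case: tFG.
Qed.
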